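(* For $\alpha>1$, integers $k\ge1$ and $n\ge0$, $$\sum_{i=1}^n\ \sum_{k_1+k_2=k}\frac{1}{(10n+10.3-10i)^2\,(10i+0.3)^2}\cdot\frac{k!}{k_1!\,k_2!}\,(k_1+3(n+1-i))^{\alpha(k_1+3(n+1-i))}\,(k_2+3i)^{\alpha(k_2+3i)}$$ $$\le\ \frac{0.05\cdot 4^{-(\alpha-3/2)}}{1-4^{-(\alpha-1)}}\cdot\frac{(k+3(n+1))^{\alpha(k+3(n+1))}}{(10n+10.3)^2},$$ where the inner sum is over nonnegative integers $k_1,k_2$.
   Context: Convention $0^0=1$; an empty sum (when $n=0$) is $0$. *)

From Stdlib Require Import Reals Factorial.
Open Scope R_scope.

Fixpoint rsum (n : nat) (f : nat -> R) : R :=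
  match n with
  | O => 0
  | S m => rsum m f + f m
  end.

Definition rpow (x y : R) : R := Rpower x y.

(* self power m^(alpha*m) for a natural number m (here always m >= 3 > 0) *)
Definition spow (alpha : R) (m : nat) : R := rpow (INR m) (alpha * INR m).

From Stdlib Require Import Reals Factorial Lia Lra Psatz.
From mathcomp Require ssreflect ssrbool ssrnat eqtype bigop binomial fintype zify.

(* Fix a summand with A = k1 + a, B = k2 + b, where a = 3(n+1-i), b = 3i, so that
   A + B = k + 3(n+1), and let r = 4^(-(alpha-1)) < 1.  Two integer inequalities
     (1) C(k,k1) (a+b) A^A B^B <= (A+B)^(A+B)   (Vandermonde and the binomial theorem),
     (2) A^A B^B 4^min(A,B) <= (A+B)^(A+B)       (x (x+d) 4 <= (2x+d)^2),
   combined through the splitting P^alpha = P * P^(alpha-1), give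
     C(k,k1) A^(alpha A) B^(alpha B) <= (A+B)^(alpha (A+B)) / (a+b) * (r^A + r^B).
   Since a, b >= 3, summing over k1 leaves two geometric series, whence the inner
   sum is at most (k+3(n+1))^(alpha(k+3(n+1))) / (3(n+1)) * 2r^3/(1-r).  The outer
   weights are at most 1/(10000 n^2), and 4^(-(alpha-3/2)) = 2r makes the constants fit. *)

Module SelfPowerCombinatorics.
Import ssreflect ssrbool eqtype ssrnat fintype bigop binomial zify.
Local Open Scope nat_scope.

Lemma leq_expn_base m n e : m <= n -> m ^ e <= n ^ e.
Proof. by case: e => [//|e] le_mn; rewrite leq_exp2r. Qed.

(* The term of index x in the binomial expansion of (x + y)^(x + y). *)
Lemma binomial_self_powers x y : 'C(x + y, x) * (x ^ x * y ^ y) <= (x + y) ^ (x + y).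
Proof.
rewrite {2}(addnC x y) expnDn.
have x_lt : x < (x + y).+1 by rewrite ltnS leq_addr.
by rewrite (bigD1 (Ordinal x_lt)) //= addKn (mulnC (y ^ y)) leq_addr.
Qed.

(* The term of index k1 in Vandermonde's convolution for 'C(k + (a + b), k1 + a). *)
Lemma binomial_vandermonde_term k k1 a b : k1 <= k ->
  'C(k, k1) * 'C(a + b, a) <= 'C(k + (a + b), k1 + a).
Proof.
move=> le_k1k; rewrite -(Vandermonde k (a + b) (k1 + a)).
have k1_lt : k1 < (k1 + a).+1 by rewrite ltnS leq_addr.
by rewrite (bigD1 (Ordinal k1_lt)) //= addKn leq_addr.
Qed.

Lemma binomial_ge_top a b : 0 < a -> 0 < b -> a + b <= 'C(a + b, a).
Proof.
case: a => [//|a] _; case: b => [//|b] _; elim: b => [|b IH].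
  by rewrite addn1 binSn.
rewrite !addnS !addSn binS; rewrite addnS addSn in IH.
have : 0 < 'C((a + b).+2, a) by rewrite bin_gt0; lia.
lia.
Qed.

Lemma binomial_weight_bound k k1 a b : k1 <= k -> 0 < a -> 0 < b ->
  'C(k, k1) * (a + b) * ((k1 + a) ^ (k1 + a) * (k - k1 + b) ^ (k - k1 + b))
  <= (k + (a + b)) ^ (k + (a + b)).
Proof.
move=> le_k1k a_gt0 b_gt0.
have split_total : k + (a + b) = (k1 + a) + (k - k1 + b) by lia.
rewrite split_total; apply: leq_trans (binomial_self_powers _ _).
apply: leq_mul => //; rewrite -split_total.
apply: leq_trans _ (binomial_vandermonde_term _ _ _ _ le_k1k).
by rewrite leq_mul2l binomial_ge_top ?orbT.
Qed.

(* The self-power of a sum gains a factor 4 per unit of the smaller part: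
   x^x y^y 4^min(x,y) <= (x+y)^(x+y), by x (x+d) 4 <= (2x+d)^2. *)
Lemma self_powers_four x y : x ^ x * y ^ y * 4 ^ minn x y <= (x + y) ^ (x + y).
Proof.
wlog le_xy : x y / x <= y.
  move=> W; case/orP: (leq_total x y) => le; first exact: W.
  by rewrite minnC addnC (mulnC (x ^ x)); apply: W.
rewrite (minn_idPl le_xy); have [d ->] : exists d, y = x + d by exists (y - x); lia.
have -> : x + (x + d) = 2 * x + d by lia.
have amgm : x * (x + d) * 4 <= (2 * x + d) ^ 2 by nia.
rewrite (expnD (x + d)) (expnD (2 * x + d)) (expnM (2 * x + d) 2 x).
have -> : x ^ x * ((x + d) ^ x * (x + d) ^ d) * 4 ^ x
          = (x * (x + d) * 4) ^ x * (x + d) ^ d by rewrite !expnMn; lia.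
by apply: leq_mul; apply: leq_expn_base => //; lia.
Qed.

Lemma expn_pow m e : m ^ e = Nat.pow m e.
Proof. by elim: e => [|e IH] //; rewrite expnS IH. Qed.

Lemma factorial_fact n : n`! = fact n.
Proof. by elim: n => [|n IH] //; rewrite factS IH. Qed.

Lemma minn_min m n : minn m n = Nat.min m n.
Proof. by lia. Qed.

End SelfPowerCombinatorics.

Set Bullet Behavior "Strict Subproofs".
Open Scope R_scope.

Lemma rsum_le n f g : (forall j, (j < n)%nat -> f j <= g j) -> rsum n f <= rsum n g.
Proof.
induction n as [|n IH]; intros Hfg; simpl.
- lra.
- apply Rplus_le_compat; [apply IH; intros; apply Hfg|apply Hfg]; lia.
Qed.

Lemma rsum_ext n f g : (forall j, (j < n)%nat -> f j = g j) -> rsum n f = rsum n g.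
Proof.
induction n as [|n IH]; intros Hfg; simpl.
- reflexivity.
- rewrite IH by (intros; apply Hfg; lia). rewrite Hfg by lia. reflexivity.
Qed.

Lemma rsum_scal n c f : rsum n (fun j => c * f j) = c * rsum n f.
Proof. induction n as [|n IH]; simpl; [|rewrite IH]; ring. Qed.

Lemma rsum_plus n f g : rsum n (fun j => f j + g j) = rsum n f + rsum n g.
Proof. induction n as [|n IH]; simpl; [|rewrite IH]; ring. Qed.

Lemma rsum_const n c : rsum n (fun _ => c) = INR n * c.
Proof. induction n as [|n IH]; simpl rsum; [simpl|rewrite IH, S_INR]; ring. Qed.

Lemma rsum_shift n f : rsum (S n) f = f O + rsum n (fun j => f (S j)).
Proof. induction n as [|n IH]; simpl in *; [|rewrite IH]; ring. Qed.

Lemma rsum_reflect n f : rsum n (fun j => f (n - S j)%nat) = rsum n f.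
Proof.
revert f; induction n as [|n IH]; intros f; [reflexivity|].
rewrite (rsum_shift n f), <- (IH (fun j => f (S j))). simpl rsum.
rewrite Nat.sub_diag, Rplus_comm; f_equal.
apply rsum_ext; intros j Hj; f_equal; lia.
Qed.

Lemma geometric_rsum r n : rsum n (fun j => r ^ j) * (1 - r) = 1 - r ^ n.
Proof. induction n as [|n IH]; simpl rsum; [simpl|rewrite Rmult_plus_distr_r, IH; simpl]; ring. Qed.

Lemma geometric_rsum_le r n : 0 <= r < 1 -> rsum n (fun j => r ^ j) <= / (1 - r).
Proof.
intros Hr.
assert (0 <= r ^ n) by (apply pow_le; lra).
apply (Rmult_le_reg_r (1 - r)); [lra|].
rewrite geometric_rsum, Rinv_l by lra. lra.
Qed.

Lemma decay_ratio_bounds alpha : 1 < alpha -> 0 < rpow 4 (- (alpha - 1)) < 1.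
Proof.
intros Halpha. unfold rpow, Rpower. split; [apply exp_pos|].
assert (0 < ln 4) by (rewrite <- ln_1; apply ln_increasing; lra).
apply Rlt_le_trans with (exp 0); [apply exp_increasing; nra|rewrite exp_0; lra].
Qed.

(* 4^(-(alpha - 3/2)) = 4^(1/2) 4^(-(alpha-1)) = 2 r. *)
Lemma decay_ratio_half_shift alpha : rpow 4 (- (alpha - 3 / 2)) = 2 * rpow 4 (- (alpha - 1)).
Proof.
unfold rpow. replace (- (alpha - 3 / 2)) with (/ 2 + - (alpha - 1)) by field.
rewrite Rpower_plus, Rpower_sqrt by lra.
replace 4 with (2 * 2) at 1 by ring. rewrite sqrt_square by lra. reflexivity.
Qed.

Lemma four_pow_decay alpha m : Rpower (4 ^ m) (1 - alpha) = rpow 4 (- (alpha - 1)) ^ m.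
Proof.
unfold rpow. rewrite <- (Rpower_pow m 4) by lra.
rewrite <- Rpower_pow by (unfold Rpower; apply exp_pos).
rewrite !Rpower_mult. f_equal. ring.
Qed.

Lemma spow_Rpower alpha m : (1 <= m)%nat -> spow alpha m = Rpower (INR m ^ m) alpha.
Proof.
intros Hm. unfold spow, rpow. rewrite <- Rpower_pow by (apply lt_0_INR; lia).
rewrite Rpower_mult. f_equal. ring.
Qed.

Lemma spow_pos alpha m : 0 < spow alpha m.
Proof. apply exp_pos. Qed.

(* Splitting P^alpha = P * P^(alpha-1): the first factor absorbs the weight c d
   (using c d P <= Q), the second gains the factor F^(1-alpha) (using P F <= Q). *)
Lemma power_gain_bound alpha c d P Q F :
  1 <= alpha -> 0 <= c -> 0 < d -> 0 < P -> 0 < F ->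
  c * d * P <= Q -> P * F <= Q ->
  c * Rpower P alpha <= Rpower Q alpha / d * Rpower F (1 - alpha).
Proof.
intros Halpha Hc Hd HP HF Hweight Hgain.
assert (HQ : 0 < Q) by nra.
assert (Hsplit : forall X, 0 < X -> Rpower X alpha = X * Rpower X (alpha - 1)).
{ intros X HX. rewrite <- (Rpower_1 X) at 2 by exact HX.
  rewrite <- Rpower_plus. f_equal. ring. }
assert (Hlinear : c * P <= Q / d).
{ apply (Rmult_le_reg_r d); [exact Hd|].
  replace (Q / d * d) with Q by (field; lra).
  replace (c * P * d) with (c * d * P) by ring. exact Hweight. }
assert (Hcancel : Rpower F (alpha - 1) * Rpower F (1 - alpha) = 1).
{ rewrite <- Rpower_plus, <- (Rpower_O F HF). f_equal. ring. }
assert (Hexcess : Rpower P (alpha - 1) <= Rpower Q (alpha - 1) * Rpower F (1 - alpha)).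
{ replace (Rpower P (alpha - 1))
    with (Rpower P (alpha - 1) * Rpower F (alpha - 1) * Rpower F (1 - alpha))
    by (rewrite Rmult_assoc, Hcancel; ring).
  apply Rmult_le_compat_r; [left; apply exp_pos|].
  rewrite Rpower_mult_distr by assumption.
  apply Rle_Rpower_l; [lra|split; [nra|exact Hgain]]. }
rewrite !Hsplit by assumption.
assert (0 < Rpower P (alpha - 1)) by apply exp_pos.
replace (Q * Rpower Q (alpha - 1) / d * Rpower F (1 - alpha))
  with (Q / d * (Rpower Q (alpha - 1) * Rpower F (1 - alpha))) by (field; lra).
rewrite <- Rmult_assoc.
apply Rmult_le_compat; [nra|lra|exact Hlinear|exact Hexcess].
Qed.

Lemma C_binomial k k1 : (k1 <= k)%nat -> C k k1 = INR (binomial.binomial k k1).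
Proof.
intros Hk.
assert (Hfact : (binomial.binomial k k1 * (fact k1 * fact (k - k1)) = fact k)%nat).
{ rewrite <- !SelfPowerCombinatorics.factorial_fact.
  apply binomial.bin_fact, (ssrbool.introT ssrnat.leP), Hk. }
unfold C. rewrite <- Hfact, !mult_INR.
field. split; apply INR_fact_neq_0.
Qed.

Lemma binomial_weight_bound_R k k1 a b : (k1 <= k)%nat -> (1 <= a)%nat -> (1 <= b)%nat ->
  C k k1 * INR (a + b) * (INR (k1 + a) ^ (k1 + a) * INR (k - k1 + b) ^ (k - k1 + b))
  <= INR (k + (a + b)) ^ (k + (a + b)).
Proof.
intros Hk Ha Hb. rewrite C_binomial by exact Hk.
rewrite <- !pow_INR, <- !mult_INR. apply le_INR.
rewrite <- !SelfPowerCombinatorics.expn_pow.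
apply (ssrbool.elimT ssrnat.leP), SelfPowerCombinatorics.binomial_weight_bound.
- exact (ssrbool.introT ssrnat.leP Hk).
- exact (ssrbool.introT ssrnat.ltP Ha).
- exact (ssrbool.introT ssrnat.ltP Hb).
Qed.

Lemma self_powers_four_R x y :
  INR x ^ x * INR y ^ y * 4 ^ Nat.min x y <= INR (x + y) ^ (x + y).
Proof.
replace 4 with (INR 4) by (simpl; ring).
rewrite <- !pow_INR, <- !mult_INR. apply le_INR.
rewrite <- SelfPowerCombinatorics.minn_min, <- !SelfPowerCombinatorics.expn_pow.
apply (ssrbool.elimT ssrnat.leP), SelfPowerCombinatorics.self_powers_four.
Qed.

Lemma binomial_term_bound alpha k k1 a b :
  1 < alpha -> (k1 <= k)%nat -> (1 <= a)%nat -> (1 <= b)%nat ->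
  let r := rpow 4 (- (alpha - 1)) in
  C k k1 * spow alpha (k1 + a) * spow alpha (k - k1 + b)
  <= spow alpha (k + (a + b)) / INR (a + b) * (r ^ (k1 + a) + r ^ (k - k1 + b)).
Proof.
intros Halpha Hk Ha Hb r.
pose proof (decay_ratio_bounds alpha Halpha) as Hr. fold r in Hr.
pose proof (binomial_weight_bound_R k k1 a b Hk Ha Hb) as Hweight.
pose proof (self_powers_four_R (k1 + a) (k - k1 + b)) as Hgain.
replace (k + (a + b))%nat with (k1 + a + (k - k1 + b))%nat in * by lia.
set (x := (k1 + a)%nat) in *. set (y := (k - k1 + b)%nat) in *.
assert (Hx : 0 < INR x ^ x) by (apply pow_lt, lt_0_INR; unfold x; lia).
assert (Hy : 0 < INR y ^ y) by (apply pow_lt, lt_0_INR; unfold y; lia).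
rewrite !spow_Rpower by (unfold x, y; lia).
rewrite Rmult_assoc, Rpower_mult_distr by assumption.
apply Rle_trans with
  (Rpower (INR (x + y) ^ (x + y)) alpha / INR (a + b) * Rpower (4 ^ Nat.min x y) (1 - alpha)).
- apply power_gain_bound; try assumption; try lra.
  + unfold C. apply Rmult_le_pos; [apply pos_INR|].
    left. apply Rinv_0_lt_compat, Rmult_lt_0_compat; apply lt_0_INR, lt_O_fact.
  + apply lt_0_INR. lia.
  + apply Rmult_lt_0_compat; assumption.
  + apply pow_lt. lra.
- rewrite four_pow_decay. fold r.
  apply Rmult_le_compat_l.
  + left. apply Rdiv_lt_0_compat; [apply exp_pos|apply lt_0_INR; lia].
  + assert (0 <= r ^ x) by (apply pow_le; lra).
    assert (0 <= r ^ y) by (apply pow_le; lra).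
    destruct (Nat.min_spec x y) as [[_ ->]|[_ ->]]; lra.
Qed.

Lemma pow_shift_le r j a : 0 <= r <= 1 -> (3 <= a)%nat -> r ^ (j + a) <= r ^ 3 * r ^ j.
Proof.
intros Hr Ha.
replace (j + a)%nat with (j + 3 + (a - 3))%nat by lia. rewrite !pow_add.
assert (r ^ (a - 3) <= 1) by (rewrite <- (pow1 (a - 3)); apply pow_incr; lra).
assert (0 <= r ^ j * r ^ 3) by (apply Rmult_le_pos; apply pow_le; lra).
nra.
Qed.

(* The inner sum over k1 + k2 = k: each term is bounded via binomial_term_bound,
   and the two geometric tails in k1 and k - k1 each sum to at most r^3/(1-r). *)
Lemma inner_sum_bound alpha k a b : 1 < alpha -> (3 <= a)%nat -> (3 <= b)%nat ->
  let r := rpow 4 (- (alpha - 1)) in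
  rsum (S k) (fun k1 => C k k1 * spow alpha (k1 + a) * spow alpha (k - k1 + b))
  <= spow alpha (k + (a + b)) / INR (a + b) * (2 * r ^ 3 / (1 - r)).
Proof.
intros Halpha Ha Hb r.
pose proof (decay_ratio_bounds alpha Halpha) as Hr. fold r in Hr.
set (K := spow alpha (k + (a + b)) / INR (a + b)).
assert (HK : 0 <= K) by (left; apply Rdiv_lt_0_compat; [apply spow_pos|apply lt_0_INR; lia]).
assert (Hr3 : 0 <= r ^ 3) by (apply pow_le; lra).
apply Rle_trans with (rsum (S k) (fun k1 => K * (r ^ 3 * r ^ k1 + r ^ 3 * r ^ (k - k1)))).
- apply rsum_le. intros k1 Hk1.
  eapply Rle_trans; [apply binomial_term_bound; (assumption || lia)|].
  apply Rmult_le_compat_l; [exact HK|].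
  apply Rplus_le_compat; apply pow_shift_le; (lra || assumption).
- rewrite rsum_scal, rsum_plus, !rsum_scal.
  assert (Hreflect : rsum (S k) (fun j => r ^ (k - j)) = rsum (S k) (fun j => r ^ j))
    by exact (rsum_reflect (S k) (fun j => r ^ j)).
  rewrite Hreflect.
  pose proof (geometric_rsum_le r (S k) ltac:(lra)) as Hgeom.
  apply Rmult_le_compat_l; [exact HK|].
  replace (2 * r ^ 3 / (1 - r)) with (r ^ 3 * / (1 - r) + r ^ 3 * / (1 - r)) by (field; lra).
  apply Rplus_le_compat; apply Rmult_le_compat_l; assumption.
Qed.

(* For 1 <= t <= N: (10N + 10.3 - 10t)(10t + 0.3) >= 100 N, by concavity in t. *)
Lemma outer_weight_bound N t : 1 <= t <= N ->
  0 < 1 / ((10 * N + 103 / 10 - 10 * t) ^ 2 * (10 * t + 3 / 10) ^ 2)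
  <= 1 / (10000 * N ^ 2).
Proof.
intros Ht.
assert (Hprod : 100 * N <= (10 * N + 103 / 10 - 10 * t) * (10 * t + 3 / 10)).
{ assert (0 <= (N - t) * (t - 1)) by (apply Rmult_le_pos; lra). nra. }
rewrite <- Rpow_mult_distr. unfold Rdiv. rewrite !Rmult_1_l. split.
- apply Rinv_0_lt_compat, pow_lt. nra.
- apply Rinv_le_contravar; [nra|]. replace (10000 * N ^ 2) with ((100 * N) ^ 2) by ring.
  apply pow_incr. lra.
Qed.

(* The final comparison of constants; it uses only N >= 1 and r^2 <= 1. *)
Lemma constants_bound N r p : 1 <= N -> 0 < r < 1 -> 0 < p ->
  N * (1 / (10000 * N ^ 2) * (p / (3 * (N + 1)) * (2 * r ^ 3 / (1 - r))))
  <= 5 / 100 * (2 * r) / (1 - r) * (p / (10 * N + 103 / 10) ^ 2).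
Proof.
intros HN Hr Hp.
replace (N * (1 / (10000 * N ^ 2) * (p / (3 * (N + 1)) * (2 * r ^ 3 / (1 - r)))))
  with (p * r / (1 - r) * (r ^ 2 / (15000 * N * (N + 1)))) by (field; lra).
replace (5 / 100 * (2 * r) / (1 - r) * (p / (10 * N + 103 / 10) ^ 2))
  with (p * r / (1 - r) * (1 / (10 * (10 * N + 103 / 10) ^ 2))) by (field; lra).
apply Rmult_le_compat_l; [left; apply Rdiv_lt_0_compat; nra|].
apply Rle_trans with (1 / (15000 * N * (N + 1))).
- unfold Rdiv. apply Rmult_le_compat_r; [left; apply Rinv_0_lt_compat; nra|nra].
- unfold Rdiv. rewrite !Rmult_1_l. apply Rinv_le_contravar; nra.
Qed.

Lemma outer_term_bound alpha k n j : 1 < alpha -> (j < n)%nat ->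
  let i := S j in
  let r := rpow 4 (- (alpha - 1)) in
  rsum (S k) (fun k1 => let k2 := (k - k1)%nat in
    1 / ((10 * INR n + 103 / 10 - 10 * INR i) ^ 2 * (10 * INR i + 3 / 10) ^ 2)
    * (INR (fact k) / (INR (fact k1) * INR (fact k2)))
    * spow alpha (k1 + 3 * (n + 1 - i))%nat
    * spow alpha (k2 + 3 * i)%nat)
  <= 1 / (10000 * INR n ^ 2)
     * (spow alpha (k + 3 * (n + 1))%nat / (3 * (INR n + 1)) * (2 * r ^ 3 / (1 - r))).
Proof.
intros Halpha Hj i r.
set (W := 1 / ((10 * INR n + 103 / 10 - 10 * INR i) ^ 2 * (10 * INR i + 3 / 10) ^ 2)).
assert (HW : 0 < W <= 1 / (10000 * INR n ^ 2)).
{ apply outer_weight_bound. split; [apply (le_INR 1)|apply le_INR]; unfold i; lia. }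
rewrite (rsum_ext (S k) _
  (fun k1 => W * (C k k1 * spow alpha (k1 + 3 * (n + 1 - i)) * spow alpha (k - k1 + 3 * i))))
  by (intros; unfold C; ring).
rewrite rsum_scal.
pose proof (inner_sum_bound alpha k (3 * (n + 1 - i)) (3 * i) Halpha
  ltac:(unfold i; lia) ltac:(unfold i; lia)) as Hinner.
replace (3 * (n + 1 - i) + 3 * i)%nat with (3 * (n + 1))%nat in Hinner by (unfold i; lia).
replace (INR (3 * (n + 1))) with (3 * (INR n + 1)) in Hinner
  by (rewrite mult_INR, plus_INR; simpl; ring).
fold r in Hinner.
apply Rle_trans with (W * (spow alpha (k + 3 * (n + 1)) / (3 * (INR n + 1)) * (2 * r ^ 3 / (1 - r)))).
- apply Rmult_le_compat_l; [lra|exact Hinner].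
- pose proof (decay_ratio_bounds alpha Halpha) as Hr. fold r in Hr.
  apply Rmult_le_compat_r; [|lra].
  assert (0 < r ^ 3) by (apply pow_lt; lra).
  left. apply Rmult_lt_0_compat; apply Rdiv_lt_0_compat; try nra.
  apply spow_pos. pose proof (pos_INR n). lra.
Qed.

Theorem corollaryA3 (alpha : R) (k n : nat) :
  1 < alpha -> (1 <= k)%nat ->
  rsum n (fun j => let i := S j in
    rsum (S k) (fun k1 => let k2 := (k - k1)%nat in
      1 / ((10 * INR n + 103 / 10 - 10 * INR i) ^ 2 * (10 * INR i + 3 / 10) ^ 2)
      * (INR (fact k) / (INR (fact k1) * INR (fact k2)))
      * spow alpha (k1 + 3 * (n + 1 - i))%nat
      * spow alpha (k2 + 3 * i)%nat))
  <= (5 / 100) * rpow 4 (- (alpha - 3 / 2)) / (1 - rpow 4 (- (alpha - 1)))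
     * (spow alpha (k + 3 * (n + 1))%nat / (10 * INR n + 103 / 10) ^ 2).
Proof.
intros Halpha _.
rewrite decay_ratio_half_shift.
pose proof (decay_ratio_bounds alpha Halpha) as Hr.
set (r := rpow 4 (- (alpha - 1))) in *.
pose proof (spow_pos alpha (k + 3 * (n + 1))) as Hp.
destruct (Nat.eq_dec n 0) as [-> | Hn].
-
  simpl rsum. left. apply Rmult_lt_0_compat; apply Rdiv_lt_0_compat; try nra.
  apply pow_lt. simpl. lra.
- eapply Rle_trans.
  + apply rsum_le. intros j Hj. exact (outer_term_bound alpha k n j Halpha Hj).
  + rewrite rsum_const. apply constants_bound; [apply (le_INR 1); lia|lra|exact Hp].
Qed.
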